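(* For every non-increasing function $\varphi:(0,1]\to\mathbb{R}^+$, the set $N_\varphi$ is a normal subgroup of $G$.
   Context: $\mathbb{D}^2$ is the closed unit disc with normalised Lebesgue measure $\mathrm{Area}$ ($\mathrm{Area}(\mathbb{D}^2)=1$); $G$ is the group of area-preserving homeomorphisms of $\mathbb{D}^2$ that are the identity on a neighbourhood of $\partial\mathbb{D}^2$. A topological disc is the image of a closed euclidean disc under an element of $G$. The size of $g\in G$ is the infimum of $\mathrm{Area}(D)$ over topological discs $D$ containing the support (closure of the set of non-fixed points) of $g$. For $\rho\in(0,1]$, $\|g\|_\rho$ is the least integer $m$ such that $g$ is a product of $m$ elements of $G$ of size less than $\rho$. $N_\varphi=\{g\in G:\|g\|_\rho=O(\varphi(\rho))\}$, where $\psi(\rho)=O(\varphi(\rho))$ means there is $K>0$ with $\psi(\rho)<K\varphi(\rho)$ for all sufficiently small $\rho>0$. *)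

From HB Require Import structures.
From mathcomp Require Import all_boot all_order all_algebra.
From mathcomp Require Import all_classical all_reals all_analysis.
Set Implicit Arguments. Unset Strict Implicit. Unset Printing Implicit Defensive.
Import Order.TTheory GRing.Theory Num.Theory.
Import numFieldNormedType.Exports.
Local Open Scope classical_set_scope.
Local Open Scope ring_scope.

Definition cdisc (R : realType) (c : R * R) (r : R) : set (R * R) :=
  [set x | (x.1 - c.1) ^+ 2 + (x.2 - c.2) ^+ 2 <= r ^+ 2].

Definition unit_disc (R : realType) : set (R * R) := cdisc (0, 0) 1.

Definition leb2 (R : realType) : set (R * R) -> \bar R :=
  (@lebesgue_measure R \x @lebesgue_measure R)%E.

(* Normalised area: Area(D^2) = 1. *)
Definition area (R : realType) (A : set (R * R)) : \bar R :=
  (leb2 A * (pi^-1)%:E)%E.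

(* An area-preserving homeomorphism of D^2 which is the
   identity near the boundary is represented by its extension by the
   identity to the whole plane: a homeomorphism f of R^2 which is the
   identity outside a disc of radius r < 1 and preserves Lebesgue measure. *)
Definition in_G (R : realType) (f : R * R -> R * R) : Prop :=
  (exists g : R * R -> R * R,
      continuous f /\ continuous g /\ cancel f g /\ cancel g f) /\
  (exists r : R, 0 < r < 1 /\
      forall x : R * R, r ^+ 2 < x.1 ^+ 2 + x.2 ^+ 2 -> f x = x) /\
  (forall A : set (R * R), measurable A -> leb2 (f @^-1` A) = leb2 A).

Definition top_disc (R : realType) (D : set (R * R)) : Prop :=
  exists (h : R * R -> R * R) (c : R * R) (r : R),
    in_G h /\ 0 < r /\ cdisc c r `<=` @unit_disc R /\ D = h @` cdisc c r.

Definition support (R : realType) (g : R * R -> R * R) : set (R * R) :=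
  closure [set x | g x <> x].

Definition gsize (R : realType) (g : R * R -> R * R) : \bar R :=
  ereal_inf [set area D | D in [set D | top_disc D /\ support g `<=` D]].

Definition comp_list (R : realType) (s : seq (R * R -> R * R)) :
  R * R -> R * R := foldr (fun f acc => f \o acc) id s.

Definition frag_norm (R : realType) (g : R * R -> R * R) (rho : R) : \bar R :=
  ereal_inf [set (m%:R)%:E | m in
    [set m : nat | exists s : seq (R * R -> R * R),
       size s = m /\
       (forall f, f \in s -> in_G f /\ (gsize f < rho%:E)%E) /\
       g = comp_list s]].

Definition N_phi (R : realType) (phi : R -> R) : set (R * R -> R * R) :=
  [set g | in_G g /\
    exists K : R, 0 < K /\ exists delta : R, 0 < delta /\
      forall rho : R, 0 < rho -> rho <= 1 -> rho < delta ->
        (frag_norm g rho < (K * phi rho)%:E)%E].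

Definition normal_subgroup_of_G (R : realType) (N : set (R * R -> R * R)) :
  Prop :=
  N `<=` [set f | in_G f] /\
  N id /\
  (forall g h, N g -> N h -> N (g \o h)) /\
  (forall g g', N g -> cancel g g' -> cancel g' g -> N g') /\
  (forall g h h', N g -> in_G h -> cancel h h' -> cancel h' h ->
     N (h \o g \o h')).

(** The norm [||.||_rho] is subadditive and invariant under inversion (the
    inverse of a word in small elements is the reversed word of inverses,
    which have the same supports) and under conjugation by [h] in [G]: if a
    topological disc [D] covers the support of [f], then [h D] is a
    topological disc of the same area covering the support of [h f h^-1].
    Hence the growth condition [||g||_rho = O(phi rho)] is preserved by
    products, inverses and conjugates. *)

From Pilot Require Import Defs.
From mathcomp Require Import all_boot all_order all_algebra.
From mathcomp Require Import all_classical all_reals all_analysis.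
From mathcomp Require Import lra.
Set Implicit Arguments. Unset Strict Implicit. Unset Printing Implicit Defensive.
Import Order.TTheory GRing.Theory Num.Theory.
Import numFieldNormedType.Exports.
Local Open Scope classical_set_scope.
Local Open Scope ring_scope.

Section PlaneMeasurability.
Variable R : realType.

Definition rat_box (q1 q2 : rat) (n : nat) : set (R * R) :=
  `](ratr q1 - n.+1%:R^-1), (ratr q1 + n.+1%:R^-1)[ `*`
  `](ratr q2 - n.+1%:R^-1), (ratr q2 + n.+1%:R^-1)[.

Lemma rat_box_measurable q1 q2 n : measurable (rat_box q1 q2 n).
Proof. by apply: measurableX; exact: measurable_itv. Qed.

Lemma open_rat_box_nbhs (U : set (R * R)) x : open U -> U x ->
  exists q1 q2 n, rat_box q1 q2 n `<=` U /\ rat_box q1 q2 n x.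
Proof.
rewrite openE => /[apply] /nbhs_ballP [e /= e0 xeU].
pose n := Num.truncn (2 / e); set d : R := n.+1%:R^-1.
have d_lt : d < e / 2.
  rewrite /d -[X in _ < X]invf_div ltf_pV2 ?posrE ?divr_gt0 //.
  exact: archimedean.Num.Theory.truncnS_gt.
have d0 : 0 < d by rewrite invr_gt0.
have [q1] := @rat_in_itvoo R (x.1 - d) (x.1 + d) ltac:(lra).
have [q2] := @rat_in_itvoo R (x.2 - d) (x.2 + d) ltac:(lra).
rewrite !in_itv /= => /andP[q2a q2b] /andP[q1a q1b].
exists q1, q2, n; split.
- move=> y [/=]; rewrite !in_itv /= -/d => /andP[y1a y1b] /andP[y2a y2b].
  by apply: xeU; split; rewrite /= -ball_normE /ball_ /= ltr_norml;
    apply/andP; split; lra.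
- by split; rewrite /= in_itv /= -/d; apply/andP; split; lra.
Qed.

Lemma open_measurable_pair (U : set (R * R)) : open U -> measurable U.
Proof.
move=> oU.
have -> : U = \bigcup_(q1 : rat) \bigcup_(q2 : rat)
    \bigcup_(n in [set n | rat_box q1 q2 n `<=` U]) rat_box q1 q2 n.
  apply/seteqP; split=> [x Ux|x [q1 _ [q2 _ [n boxU]]]]; last exact: boxU.
  have [q1 [q2 [n [boxU boxx]]]] := open_rat_box_nbhs oU Ux.
  by exists q1 => //; exists q2 => //; exists n.
apply: bigcupT_measurable_rat => q1; apply: bigcupT_measurable_rat => q2.
by apply: bigcup_measurable => n _; exact: rat_box_measurable.
Qed.

Lemma continuous_measurable_fun_pair (f : R * R -> R) :
  continuous f -> measurable_fun setT f.
Proof.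
move=> /continuousP fcont.
apply: (measurability _ (measurable_realfun.RGenOpens.measurableE R)).
move=> _ [_ [a [b ->] <-]]; rewrite setTI.
by apply: open_measurable_pair; apply: fcont; exact: interval_open.
Qed.

Lemma continuous_measurable_preimage (f : R * R -> R * R) (A : set (R * R)) :
  continuous f -> measurable A -> measurable (f @^-1` A).
Proof.
move=> fcont mA; rewrite -[f @^-1` A]setTI.
apply: (_ : measurable_fun setT f) => //.
apply/measurable_fun_pairP; split; apply: continuous_measurable_fun_pair => x.
- by apply: continuous_comp (fcont x) _; exact: cvg_fst.
- by apply: continuous_comp (fcont x) _; exact: cvg_snd.
Qed.

Lemma cdisc_measurable (c : R * R) (r : R) : measurable (cdisc c r).
Proof.
have mdist : measurable_fun setT
    (fun x : R * R => (x.1 - c.1) ^+ 2 + (x.2 - c.2) ^+ 2).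
  apply: measurable_realfun.measurable_funD;
    apply: measurable_realfun.measurable_funX;
    apply: measurable_realfun.measurable_funB.
  - exact: measurable_fst.
  - exact: measurable_cst.
  - exact: measurable_snd.
  - exact: measurable_cst.
have := mdist measurableT _ (measurable_itv `]-oo, r ^+ 2]).
by rewrite setTI; congr measurable; apply/seteqP; split => x /=; rewrite in_itv.
Qed.

End PlaneMeasurability.

Section GroupG.
Variable R : realType.
Implicit Types (f g h : R * R -> R * R) (D : set (R * R)).

Lemma image_cancel_preimage h h' D :
  cancel h h' -> cancel h' h -> h @` D = h' @^-1` D.
Proof.
move=> hK h'K; apply/seteqP; split => x; first by move=> [y Dy <-] /=; rewrite hK.
by move=> Dx; exists (h' x) => //; rewrite h'K.
Qed.

Lemma in_G_id : in_G (@id (R * R)).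
Proof.
split; first by exists id; split; [|split] => // x; exact: cvg_id.
by split => //; exists (1 / 2); split => //; apply/andP; split; lra.
Qed.

Lemma in_G_measurable_preimage f A : in_G f -> measurable A ->
  measurable (f @^-1` A).
Proof. by move=> [[_ [fcont _]] _]; exact: continuous_measurable_preimage. Qed.

Lemma in_G_comp f g : in_G f -> in_G g -> in_G (f \o g).
Proof.
move=> fG gG.
have [[f' [fcont [f'cont [fK f'K]]]] [[r1 [/andP[r10 r11] fid]] fleb]] := fG.
have [[g' [gcont [g'cont [gK g'K]]]] [[r2 [/andP[r20 r21] gid]] gleb]] := gG.
split; [|split].
- exists (g' \o f'); split; [|split].
  + by move=> x; exact: continuous_comp (gcont x) (fcont (g x)).
  + by move=> x; exact: continuous_comp (f'cont x) (g'cont (f' x)).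
  + by split => x /=; rewrite ?fK ?gK ?g'K ?f'K.
- exists (Num.max r1 r2); split.
    by rewrite lt_max r10 gt_max r11 r21.
  have [r12 r22] : r1 ^+ 2 <= (Num.max r1 r2) ^+ 2 /\
                   r2 ^+ 2 <= (Num.max r1 r2) ^+ 2.
    by rewrite !ler_sqr ?nnegrE ?le_max ?lexx ?orbT ?(ltW r10) ?(ltW r20)
       ?(le_trans (ltW r10) (le_max_l _ _)).
  by move=> x x_out /=; rewrite gid ?fid //; lra.
- move=> A mA; rewrite comp_preimage gleb ?fleb //.
  exact: in_G_measurable_preimage.
Qed.

Lemma in_G_inv f f' : in_G f -> cancel f f' -> in_G f'.
Proof.
move=> [[g [fcont [gcont [fK gK]]]] [[r [r01 fid]] fleb]] f'K.
have -> : f' = g by apply: funext => x; rewrite -[in LHS](gK x) f'K.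
split; first by exists f.
split; first by exists r; split => // x x_out; rewrite -{1}(fid x x_out) fK.
move=> A mA; have := fleb _ (continuous_measurable_preimage gcont mA).
by rewrite -comp_preimage (_ : g \o f = id) //; apply: funext => x /=; rewrite fK.
Qed.

Lemma top_disc_measurable D : top_disc D -> measurable D.
Proof.
move=> [h [c [r [hG [_ [_ ->]]]]]].
have [[h' [_ [h'cont [hK h'K]]]] _] := hG.
rewrite (image_cancel_preimage _ hK h'K).
by apply: continuous_measurable_preimage => //; exact: cdisc_measurable.
Qed.

Lemma top_disc_image h D : in_G h -> top_disc D -> top_disc (h @` D).
Proof.
move=> hG [k [c [r [kG [r0 [cD ->]]]]]].
exists (h \o k), c, r; split; first exact: in_G_comp.
by rewrite image_comp.
Qed.

Lemma area_image h D : in_G h -> measurable D -> area (h @` D) = area D.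
Proof.
move=> hG mD; have [[h' [_ [_ [hK h'K]]]] _] := hG.
have [_ [_ h'leb]] := in_G_inv hG hK.
by rewrite /area (image_cancel_preimage _ hK h'K) h'leb.
Qed.

Lemma support_inv f f' :
  cancel f f' -> cancel f' f -> Defs.support f' = Defs.support f.
Proof.
move=> fK f'K; rewrite /Defs.support.
suff -> : [set x | f' x <> x] = [set x | f x <> x] by [].
by apply/seteqP; split => x /= + e; apply; [rewrite -{1}e fK|rewrite -{1}e f'K].
Qed.

Lemma gsize_inv f f' : cancel f f' -> cancel f' f -> gsize f' = gsize f.
Proof. by move=> fK f'K; rewrite /gsize (support_inv fK f'K). Qed.

Lemma support_conj_sub f h h' : in_G h -> cancel h h' -> cancel h' h ->
  Defs.support (h \o f \o h') `<=` h @` Defs.support f.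
Proof.
move=> hG hK h'K; have [_ [h'cont _]] := (in_G_inv hG hK).1.
rewrite (image_cancel_preimage _ hK h'K).
have /closure_id -> : closed (h' @^-1` Defs.support f).
  exact: (continuous_closedP h').1 h'cont _ (@closed_closure _ _).
apply: closureS => x /= fx; apply: subset_closure => /= e.
by apply: fx; rewrite e h'K.
Qed.

Lemma gsize_conj_le f h h' : in_G h -> cancel h h' -> cancel h' h ->
  (gsize (h \o f \o h') <= gsize f)%E.
Proof.
move=> hG hK h'K.
apply: ereal_inf_le_tmp => _ [D [Dtop fD] <-].
exists (h @` D); last by apply: area_image => //; exact: top_disc_measurable.
split; first exact: top_disc_image.
move=> x /(support_conj_sub hG hK h'K) [y fy <-]; exists y => //; exact: fD.
Qed.

End GroupG.

Section FragmentationNorm.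
Variable R : realType.
Implicit Types (f g h : R * R -> R * R) (s : seq (R * R -> R * R)).

Definition small_word (rho : R) s :=
  forall f, f \in s -> in_G f /\ (gsize f < rho%:E)%E.

Definition frag_lengths g (rho : R) : set nat :=
  [set m | exists s, size s = m /\ small_word rho s /\ g = comp_list s].

Lemma frag_norm_ltP g rho (x : R) :
  (frag_norm g rho < x%:E)%E <-> exists2 m, frag_lengths g rho m & m%:R < x.
Proof.
split; first by move=> /ereal_inf_lt [_ [m gm <-]]; rewrite lte_fin; exists m.
move=> [m gm mx]; apply: le_lt_trans (_ : _ <= (m%:R)%:E)%E _.
  by apply: ereal_inf_lbound; exists m.
by rewrite lte_fin.
Qed.

Lemma comp_list_cat s1 s2 : comp_list (s1 ++ s2) = comp_list s1 \o comp_list s2.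
Proof. by apply: funext => x; elim: s1 => //= f s ->. Qed.

Lemma comp_list_conj h h' s : cancel h h' -> cancel h' h ->
  h \o comp_list s \o h' = comp_list (map (fun f => h \o f \o h') s).
Proof.
move=> hK h'K; apply: funext => x.
by elim: s => [|f s IH] /=; rewrite ?h'K // -IH /= hK.
Qed.

(* The inverse word: reversed, with each letter inverted. *)
Lemma small_word_inv rho s : small_word rho s ->
  exists s', [/\ size s' = size s, small_word rho s',
    cancel (comp_list s) (comp_list s') & cancel (comp_list s') (comp_list s)].
Proof.
elim: s => [|f s IH] fs; first by exists [::].
have [fG fsmall] := fs f (mem_head _ _).
have [|s' [ss' s'small sK s'K]] := IH.
  by move=> g gs; apply: fs; rewrite in_cons gs orbT.
have [[f' [_ [_ [fK f'K]]]] _] := fG.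
exists (s' ++ [:: f']); split.
- by rewrite size_cat ss' addn1.
- move=> g; rewrite mem_cat mem_seq1 => /orP[/s'small //|/eqP ->].
  by rewrite (gsize_inv fK f'K); split => //; exact: in_G_inv fG fK.
- by move=> x; rewrite comp_list_cat /= fK sK.
- by move=> x; rewrite comp_list_cat /= s'K f'K.
Qed.

Lemma frag_lengths_id rho : frag_lengths id rho 0.
Proof. by exists [::]. Qed.

Lemma frag_lengths_comp g h rho m n : frag_lengths g rho m ->
  frag_lengths h rho n -> frag_lengths (g \o h) rho (m + n).
Proof.
move=> [s [<- [ssmall ->]]] [t [<- [tsmall ->]]].
exists (s ++ t); rewrite size_cat comp_list_cat; split; split => // f.
by rewrite mem_cat => /orP[/ssmall|/tsmall].
Qed.

Lemma frag_lengths_inv g g' rho m : cancel g g' ->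
  frag_lengths g rho m -> frag_lengths g' rho m.
Proof.
move=> gK [s [<- [ssmall gs]]]; subst g.
have [s' [<- s'small sK s'K]] := small_word_inv ssmall.
exists s'; split; split => //; apply: funext => x.
by rewrite -[in LHS](s'K x) gK.
Qed.

Lemma frag_lengths_conj g h h' rho m : in_G h -> cancel h h' -> cancel h' h ->
  frag_lengths g rho m -> frag_lengths (h \o g \o h') rho m.
Proof.
move=> hG hK h'K [s [<- [ssmall ->]]].
exists (map (fun f => h \o f \o h') s); rewrite size_map comp_list_conj //.
split; split => // _ /mapP [f fs ->]; have [fG fsmall] := ssmall f fs.
split; first by apply: in_G_comp; [exact: in_G_comp | exact: in_G_inv hG hK].
exact: le_lt_trans (gsize_conj_le _ hG hK h'K) fsmall.
Qed.

End FragmentationNorm.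

Section NormalSubgroup.
Variables (R : realType) (phi : R -> R).
Implicit Types (g h : R * R -> R * R).

Lemma N_phi_transfer g g' : N_phi phi g -> in_G g' ->
  (forall rho m, frag_lengths g rho m -> frag_lengths g' rho m) ->
  N_phi phi g'.
Proof.
move=> [_ [K [K0 [d [d0 gbound]]]]] g'G gg'; split => //.
exists K; split => //; exists d; split => // rho rho0 rho1 rhod.
have /frag_norm_ltP [m gm mK] := gbound rho rho0 rho1 rhod.
by apply/frag_norm_ltP; exists m => //; exact: gg'.
Qed.

Lemma N_phi_id : (forall x, 0 < x -> x <= 1 -> 0 < phi x) -> N_phi phi id.
Proof.
move=> phi_gt0; split; first exact: in_G_id.
exists 1; split => //; exists 1; split => // rho rho0 rho1 _.
by apply/frag_norm_ltP; exists 0%N; [exact: frag_lengths_id|rewrite mul1r phi_gt0].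
Qed.

Lemma N_phi_comp g h : N_phi phi g -> N_phi phi h -> N_phi phi (g \o h).
Proof.
move=> [gG [Kg [Kg0 [dg [dg0 gbound]]]]] [hG [Kh [Kh0 [dh [dh0 hbound]]]]].
split; first exact: in_G_comp.
exists (Kg + Kh); split; first by rewrite addr_gt0.
exists (Num.min dg dh); split; first by rewrite lt_min dg0.
move=> rho rho0 rho1; rewrite lt_min => /andP[rhog rhoh].
have /frag_norm_ltP [m gm mK] := gbound rho rho0 rho1 rhog.
have /frag_norm_ltP [n hn nK] := hbound rho rho0 rho1 rhoh.
apply/frag_norm_ltP; exists (m + n)%N; first exact: frag_lengths_comp.
by rewrite natrD mulrDl ltrD.
Qed.

Lemma N_phi_inv g g' : N_phi phi g -> cancel g g' -> N_phi phi g'.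
Proof.
move=> Ng gK; apply: N_phi_transfer Ng (in_G_inv Ng.1 gK) _.
by move=> rho m; exact: frag_lengths_inv.
Qed.

Lemma N_phi_conj g h h' : N_phi phi g -> in_G h -> cancel h h' ->
  cancel h' h -> N_phi phi (h \o g \o h').
Proof.
move=> Ng hG hK h'K; apply: (N_phi_transfer Ng).
  by apply: in_G_comp; [exact: in_G_comp hG Ng.1 | exact: in_G_inv hG hK].
by move=> rho m; exact: frag_lengths_conj.
Qed.

End NormalSubgroup.

Theorem proposition3 (R : realType) (phi : R -> R) :
  (forall x y : R, 0 < x -> x <= y -> y <= 1 -> phi y <= phi x) ->
  (forall x : R, 0 < x -> x <= 1 -> 0 < phi x) ->
  normal_subgroup_of_G (N_phi phi).
Proof.
move=> _ phi_gt0; split; first by move=> g [].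
split; first exact: N_phi_id.
split; first exact: N_phi_comp.
split; first by move=> g g' Ng gK _; exact: N_phi_inv Ng gK.
exact: N_phi_conj.
Qed.
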